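(* Backward proof search in $\mathsf{G4iSLt}$ is strongly terminating: there is no infinite sequence of sequents $S_0,S_1,S_2,\dots$ such that for every $k\ge 0$, $S_{k+1}$ is a premise of some instance of a rule of $\mathsf{G4iSLt}$ whose conclusion is $S_k$. Consequently, for every sequent, every tree obtained by repeatedly applying rules of $\mathsf{G4iSLt}$ backwards in any order is finite.
   Context: Formulas are built by the grammar $\varphi ::= p \mid \bot \mid \varphi\land\varphi \mid \varphi\lor\varphi \mid \varphi\to\varphi \mid \Box\varphi$, with $p$ ranging over a countably infinite set of propositional variables. For a multiset $\Gamma$, $\Box\Gamma=\{\Box\psi:\psi\in\Gamma\}$; a boxed formula is one of the form $\Box\psi$. A sequent is $\Gamma\Rightarrow\chi$ with $\Gamma$ a finite multiset of formulas and $\chi$ a formula. The sequent calculus $\mathsf{G4iSLt}$ has the following rules, where $p$ is a propositional variable and $\Phi$ always denotes a multiset containing no boxed formula: (⊥L) $\bot,\Gamma\Rightarrow\chi$ (no premise); (IdP) $\Gamma,p\Rightarrow p$ (no premise); (∧L) from $\Gamma,\varphi,\psi\Rightarrow\chi$ infer $\Gamma,\varphi\land\psi\Rightarrow\chi$; (∧R) from $\Gamma\Rightarrow\varphi$ and $\Gamma\Rightarrow\psi$ infer $\Gamma\Rightarrow\varphi\land\psi$; (∨L) from $\Gamma,\varphi\Rightarrow\chi$ and $\Gamma,\psi\Rightarrow\chi$ infer $\Gamma,\varphi\lor\psi\Rightarrow\chi$; (∨R$_i$), $i\in\{1,2\}$: from $\Gamma\Rightarrow\varphi_i$ infer $\Gamma\Rightarrow\varphi_1\lor\varphi_2$;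 (p→L) from $\Gamma,p,\varphi\Rightarrow\chi$ infer $\Gamma,p,p\to\varphi\Rightarrow\chi$; (→R) from $\Gamma,\varphi\Rightarrow\psi$ infer $\Gamma\Rightarrow\varphi\to\psi$; (□→L) from $\Phi,\Gamma,\psi,\Box\varphi\Rightarrow\varphi$ and $\Phi,\Box\Gamma,\psi\Rightarrow\chi$ infer $\Phi,\Box\Gamma,\Box\varphi\to\psi\Rightarrow\chi$; (SLtR) from $\Phi,\Gamma,\Box\varphi\Rightarrow\varphi$ infer $\Phi,\Box\Gamma\Rightarrow\Box\varphi$; (∧→L) from $\Gamma,\varphi\to(\psi\to\chi)\Rightarrow\delta$ infer $\Gamma,(\varphi\land\psi)\to\chi\Rightarrow\delta$; (∨→L) from $\Gamma,\varphi\to\chi,\psi\to\chi\Rightarrow\delta$ infer $\Gamma,(\varphi\lor\psi)\to\chi\Rightarrow\delta$; (→→L) from $\Gamma,\psi\to\chi\Rightarrow\varphi\to\psi$ and $\Gamma,\chi\Rightarrow\delta$ infer $\Gamma,(\varphi\to\psi)\to\chi\Rightarrow\delta$. *)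

From Stdlib Require Import List Permutation.
Import ListNotations.

Inductive form : Type :=
| Var : nat -> form
| Bot : form
| And : form -> form -> form
| Or  : form -> form -> form
| Imp : form -> form -> form
| Box : form -> form.

(** A sequent Γ ⇒ χ: Γ is a finite multiset, represented by a list
    (taken up to permutation, see [seq_equiv]). *)
Definition sequent : Type := (list form * form)%type.

Definition is_boxed (A : form) : Prop :=
  match A with Box _ => True | _ => False end.

Definition no_boxed (Phi : list form) : Prop := Forall (fun A => ~ is_boxed A) Phi.

Definition boxes (G : list form) : list form := map Box G.

Inductive rule_inst : list sequent -> sequent -> Prop :=
| BotL G c : rule_inst [] (Bot :: G, c)
| IdP G p : rule_inst [] (Var p :: G, Var p)
| AndL G a b c : rule_inst [(a :: b :: G, c)] (And a b :: G, c)
| AndR G a b : rule_inst [(G, a); (G, b)] (G, And a b)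
| OrL G a b c : rule_inst [(a :: G, c); (b :: G, c)] (Or a b :: G, c)
| OrR1 G a b : rule_inst [(G, a)] (G, Or a b)
| OrR2 G a b : rule_inst [(G, b)] (G, Or a b)
| AtomImpL G p a c :
    rule_inst [(Var p :: a :: G, c)] (Var p :: Imp (Var p) a :: G, c)
| ImpR G a b : rule_inst [(a :: G, b)] (G, Imp a b)
| BoxImpL Phi G a b c : no_boxed Phi ->
    rule_inst [(Phi ++ G ++ [b; Box a], a); (Phi ++ boxes G ++ [b], c)]
              (Phi ++ boxes G ++ [Imp (Box a) b], c)
| SLtR Phi G a : no_boxed Phi ->
    rule_inst [(Phi ++ G ++ [Box a], a)] (Phi ++ boxes G, Box a)
| AndImpL G a b c d :
    rule_inst [(Imp a (Imp b c) :: G, d)] (Imp (And a b) c :: G, d)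
| OrImpL G a b c d :
    rule_inst [(Imp a c :: Imp b c :: G, d)] (Imp (Or a b) c :: G, d)
| ImpImpL G a b c d :
    rule_inst [(Imp b c :: G, Imp a b); (c :: G, d)] (Imp (Imp a b) c :: G, d).

Definition seq_equiv (S T : sequent) : Prop :=
  Permutation (fst S) (fst T) /\ snd S = snd T.

Definition is_premise (S' S : sequent) : Prop :=
  exists ps C P, rule_inst ps C /\ In P ps /\ seq_equiv S C /\ seq_equiv S' P.

(** The proof assigns to every sequent a natural number that strictly
    decreases from the conclusion of any rule instance to each of its
    premises; an infinite chain of premises would then be an infinite
    descending chain in [nat].

    The weight of a formula is multiplicative: atoms weigh 3, a binary
    connective multiplies the weights of its arguments by 3 (by 9 for [And],
    so that (∧→L) decreases), and [Box a] weighs three times [a].  In an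
    antecedent a boxed formula [Box a] is only charged the weight of [a]:
    this makes (SLtR) and (□→L), which unbox the antecedent □Γ, harmless,
    while the succedent [Box a] of (SLtR), of weight [3·w a], pays for the
    two copies of weight [w a] in its premise. *)

From Stdlib Require Import List Permutation Lia.
Import ListNotations.

Lemma no_infinite_descent {A : Type} (m : A -> nat) (R : A -> A -> Prop) :
  (forall x y, R x y -> m x < m y) ->
  ~ exists f : nat -> A, forall k, R (f (S k)) (f k).
Proof.
  intros Hdec [f Hf].
  assert (Hbound : forall n k, m (f k) < n -> False).
  { induction n as [|n IH]; intros k Hk; [lia|].
    apply (IH (S k)). specialize (Hdec _ _ (Hf k)). lia. }
  apply (Hbound (S (m (f 0))) 0). lia.
Qed.

Definition wsum (w : form -> nat) (l : list form) : nat := list_sum (map w l).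

Lemma wsum_nil (w : form -> nat) : wsum w [] = 0.
Proof. reflexivity. Qed.

Lemma wsum_cons (w : form -> nat) (A : form) (l : list form) :
  wsum w (A :: l) = w A + wsum w l.
Proof. reflexivity. Qed.

Lemma wsum_app (w : form -> nat) (l1 l2 : list form) :
  wsum w (l1 ++ l2) = wsum w l1 + wsum w l2.
Proof. unfold wsum. now rewrite map_app, list_sum_app. Qed.

Lemma wsum_perm (w : form -> nat) (l1 l2 : list form) :
  Permutation l1 l2 -> wsum w l1 = wsum w l2.
Proof. intros H. apply Permutation_list_sum, Permutation_map, H. Qed.

Lemma wsum_mono (w v : form -> nat) (l : list form) :
  (forall A, w A <= v A) -> wsum w l <= wsum v l.
Proof.
  intros Hwv. unfold wsum. induction l as [|A l IH]; simpl; [lia|].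
  specialize (Hwv A). lia.
Qed.

Fixpoint weight (A : form) : nat :=
  match A with
  | Var _ | Bot => 3
  | And a b => 9 * weight a * weight b
  | Or a b | Imp a b => 3 * weight a * weight b
  | Box a => 3 * weight a
  end.

Lemma weight_ge3 (A : form) : 3 <= weight A.
Proof. induction A; simpl; nia. Qed.

Definition aweight (A : form) : nat :=
  match A with Box a => weight a | _ => weight A end.

Lemma aweight_le (A : form) : aweight A <= weight A.
Proof. destruct A; simpl; lia. Qed.

Lemma aweight_boxes (G : list form) : wsum aweight (boxes G) = wsum weight G.
Proof. unfold wsum, boxes. now rewrite map_map. Qed.

Definition measure (S : sequent) : nat := wsum aweight (fst S) + weight (snd S).

Lemma measure_equiv (S T : sequent) : seq_equiv S T -> measure S = measure T.
Proof. intros [Hperm Hsucc]. unfold measure. now rewrite (wsum_perm _ _ _ Hperm), Hsucc. Qed.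

(** After unfolding, each case is a polynomial inequality in the weights of
    the principal subformulas, all of which are at least 3 and dominate their
    antecedent weights; unboxing the context Γ in (□→L) and (SLtR) costs
    nothing by [aweight_boxes] and [wsum_mono]. *)
Lemma rule_decreases (ps : list sequent) (C P : sequent) :
  rule_inst ps C -> In P ps -> measure P < measure C.
Proof.
  intros Hrule Hin.
  destruct Hrule; simpl in Hin;
    repeat (destruct Hin as [<-|Hin]); try contradiction;
    unfold measure; cbn [fst snd];
    rewrite ?wsum_app, ?aweight_boxes, ?wsum_cons, ?wsum_nil; cbn [aweight weight];
    repeat match goal with
           | |- context [weight ?x] =>
               lazymatch goal with
               | _ : 3 <= weight x |- _ => fail
               | _ => pose proof (weight_ge3 x)
               end
           | |- context [aweight ?x] =>
               lazymatch goal with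
               | _ : aweight x <= weight x |- _ => fail
               | _ => pose proof (aweight_le x)
               end
           end.
  all: try pose proof (wsum_mono aweight weight G aweight_le).
  (* Cubic terms such as [w a * w b * w c] need the quadratic bound first. *)
  all: first [ nia | assert (9 <= weight a * weight b) by nia; nia ].
Qed.

Lemma premise_decreases (S' S : sequent) : is_premise S' S -> measure S' < measure S.
Proof.
  intros (ps & C & P & Hrule & Hin & HS & HS').
  rewrite (measure_equiv _ _ HS), (measure_equiv _ _ HS').
  exact (rule_decreases _ _ _ Hrule Hin).
Qed.

Theorem mainTheorem15 :
  ~ exists f : nat -> sequent, forall k : nat, is_premise (f (S k)) (f k).
Proof. exact (no_infinite_descent measure is_premise premise_decreases). Qed.
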